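(* Let $L$ be the Kirchhoff matrix of a weighted digraph $\Gamma$, let $\varepsilon>0$ be such that $P=I-\varepsilon L$ is row stochastic, and let $P^{\infty}=\lim_{m\to\infty}\frac1m\sum_{i=1}^m P^i$ (Ces\`aro limit). Then $P^{\infty}=\bar J$, the normalized matrix of maximum out-forests of $\Gamma$.
   Context: A weighted digraph $\Gamma$ has vertex set $\{1,\dots,n\}$, no loops, and each arc $j\to i$ ($j\ne i$) has a positive weight $a_{ij}$; $a_{ij}=0$ if there is no such arc. Its Kirchhoff matrix $L=[\ell_{ij}]$ has $\ell_{ij}=-a_{ij}$ for $j\ne i$ and $\ell_{ii}=\sum_{k\ne i}a_{ik}$. An out-forest of $\Gamma$ is a spanning subgraph whose weak components are diverging trees (rooted directed trees with paths from the root to all vertices); a maximum out-forest is one with the maximum number of arcs. The weight of a subgraph is the product of its arc weights. The normalized matrix of maximum out-forests $\bar J$ has $\bar J_{ij}$ equal to the total weight of the maximum out-forests of $\Gamma$ in which $i$ belongs to the tree rooted at $j$, divided by the total weight of all maximum out-forests. *)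

From HB Require Import structures.
From mathcomp Require Import all_boot all_order all_algebra.
Set Implicit Arguments. Unset Strict Implicit. Unset Printing Implicit Defensive.
Import Order.TTheory GRing.Theory Num.Theory.
Local Open Scope ring_scope.

(* Weighted digraph on vertices 'I_n given by a weight matrix a : 'M[R]_n,
   where an arc j -> i exists iff 0 < a i j (a i j = 0 otherwise; a i i = 0).
   A spanning subgraph is represented by its arc set F, an arc j -> i being
   the pair (j, i). *)

Section Forests.
Variables (R : numDomainType) (n : nat).
Implicit Types (a : 'M[R]_n) (F : {set 'I_n * 'I_n}).

Definition kirchhoff a : 'M[R]_n :=
  \matrix_(i, j) (if i == j then \sum_(k < n | k != i) a i k else - a i j).

Definition subgraphb a F : bool := [forall e in F, 0 < a e.2 e.1].

Definition darc F : rel 'I_n := fun x y => (x, y) \in F.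
Definition uarc F : rel 'I_n := fun x y => ((x, y) \in F) || ((y, x) \in F).

Definition wcomp F (x : 'I_n) : {set 'I_n} := [set y | connect (uarc F) x y].

(* the weak component C is a diverging tree: it is a tree (connected with
   |C| - 1 arcs) having a root from which every vertex of C is reachable *)
Definition diverging_tree_comp F (C : {set 'I_n}) : bool :=
  (#|[set e in F | e.1 \in C]| == #|C| - 1)%N &&
  [exists r in C, forall y in C, connect (darc F) r y].

Definition out_forest a F : bool :=
  subgraphb a F && [forall x, diverging_tree_comp F (wcomp F x)].

Definition max_out_forest a F : bool :=
  out_forest a F && [forall G : {set 'I_n * 'I_n}, out_forest a G ==> (#|G| <= #|F|)%N].

Definition sg_weight a F : R := \prod_(e in F) a e.2 e.1.

Definition in_tree_rooted_at F (i j : 'I_n) : bool :=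
  connect (uarc F) i j && [forall y, connect (uarc F) i y ==> connect (darc F) j y].

End Forests.

Section Jbar.
Variables (R : numFieldType) (n : nat).

Definition Jbar (a : 'M[R]_n) : 'M[R]_n :=
  \matrix_(i, j)
    ((\sum_(F : {set 'I_n * 'I_n} | max_out_forest a F && in_tree_rooted_at F i j)
        sg_weight a F) /
     (\sum_(F : {set 'I_n * 'I_n} | max_out_forest a F) sg_weight a F)).

Definition cesaro_mean (P : 'M[R]_n) (m : nat) : 'M[R]_n :=
  (m%:R)^-1 *: \sum_(1 <= k < m.+1) P ^+ k.

Definition cesaro_limit (P Q : 'M[R]_n) : Prop :=
  forall e : R, 0 < e -> exists N : nat, forall m : nat, (N < m)%N ->
    forall i j, `|cesaro_mean P m i j - Q i j| < e.

Definition row_stochastic (P : 'M[R]_n) : Prop :=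
  (forall i j, 0 <= P i j) /\ (forall i, \sum_j P i j = 1).

End Jbar.

(* An out-forest is handled through its "pointer" description: a set F of arcs
   is a branching when every vertex has in-degree at most one (its parent) and
   is reachable from an in-degree-zero vertex (a root).  Let Q k be
   the matrix whose (i, j) entry sums the weights of the k-arc branchings in
   which i lies in the tree rooted at j, and sigma k the total weight of the
   k-arc branchings.  The combinatorial core (ForestRecursion) is Chebotarev's
   recursion
                 L *m Q k = sigma k.+1 *: 1 - Q k.+1,
   proved by reindexing (k+1)-arc branchings as a k-arc branching plus the
   parent arc of i, and cancelling the remaining terms with a sign-reversing
   involution that changes the parent of i.  Taking k = max_arcs (MaxForests)
   gives L J = 0 and I - J = L X for J = Jbar a.  Finally (Cesaro), for any
   row-stochastic P, a matrix J with P J = J and I - J = (I - P) Y is the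
   Cesaro limit of the powers of P, which yields the theorem. *)

From HB Require Import structures.
From mathcomp Require Import all_boot all_order all_algebra.
Set Implicit Arguments. Unset Strict Implicit. Unset Printing Implicit Defensive.
Import Order.TTheory GRing.Theory Num.Theory.

Section Preliminaries.
Variable T : finType.

Lemma setU1K_eq (A : {set T}) x : ((x |: A) :\ x == A) = (x \notin A).
Proof.
apply/eqP/idP => [E|]; last exact: setU1K.
by apply/negP => xA; move: (xA); rewrite -E setD11.
Qed.

Lemma connect_ind_rel (e P : rel T) :
  reflexive P -> transitive P -> subrel e P -> subrel (connect e) P.
Proof.
move=> Prefl Ptrans sub x y /connectP [p pth ->]; elim: p x pth => [|z p IH] x /=.
  by move=> _; apply: Prefl.
by case/andP=> exz pz; apply: (Ptrans z); [apply: sub | apply: IH].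
Qed.

Lemma connect_last_arc (e : rel T) x y : connect e x y -> x != y ->
  exists z, connect e x z /\ e z y.
Proof.
case/connectP=> p; elim/last_ind: p => [|p z _] /=; first by move=> _ ->; rewrite eqxx.
rewrite rcons_path last_rcons => /andP [pp ez] -> _.
by exists (last x p); split => //; apply/connectP; exists p.
Qed.

End Preliminaries.

Section Branchings.
Variable n : nat.
Local Notation V := 'I_n.
Implicit Types (F G : {set V * V}) (x y z r : V).

Definition indeg_le1 F :=
  [forall y, forall x, forall x', ((x, y) \in F) ==> ((x', y) \in F) ==> (x == x')].

Definition is_root F r := [forall x, (x, r) \notin F].

Definition rooted F := [forall v, exists r, is_root F r && connect (darc F) r v].

Definition in_tree F i j := is_root F j && connect (darc F) j i.

Lemma parent_unique F x x' y : indeg_le1 F -> (x, y) \in F -> (x', y) \in F -> x = x'.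
Proof.
by move=> /forallP /(_ y) /forallP /(_ x) /forallP /(_ x') /implyP H /H /implyP H' /H' /eqP.
Qed.

Lemma is_rootP F r x : is_root F r -> (x, r) \in F = false.
Proof. by move=> /forallP /(_ x) /negbTE. Qed.

Lemma reach_root F x r : is_root F r -> connect (darc F) x r -> x = r.
Proof.
move=> rr c; case: (eqVneq x r) => // xr; case: (connect_last_arc c xr) => z [_ ezr].
by rewrite /darc is_rootP in ezr.
Qed.

Lemma ancestors_chain F x y v : indeg_le1 F ->
  connect (darc F) x v -> connect (darc F) y v ->
  connect (darc F) x y \/ connect (darc F) y x.
Proof.
move=> ind /connectP [p]; elim/last_ind: p v => [|p z IH] v /=.
  by move=> _ -> yx; right.
rewrite rcons_path last_rcons => /andP [pp ez] -> yz.
case: (eqVneq y z) => [->|yz'].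
  by left; apply/connectP; exists (rcons p z); rewrite ?rcons_path ?pp ?last_rcons.
case: (connect_last_arc yz yz') => u [yu euz].
have eu : u = last x p by apply: (parent_unique ind euz ez).
by apply: (IH (last x p)) => //; rewrite -eu.
Qed.

Lemma in_tree_unique F i j j' : indeg_le1 F -> in_tree F i j -> in_tree F i j' -> j = j'.
Proof.
move=> ind /andP [rj cj] /andP [rj' cj'].
case: (ancestors_chain ind cj cj') => c; first exact: (reach_root rj' c).
exact/esym/(reach_root rj c).
Qed.

Lemma rooted_in_tree F v : rooted F -> exists r, in_tree F v r.
Proof. by move=> /forallP /(_ v) /existsP [r H]; exists r. Qed.

Definition on_cycle F y := exists w, (w, y) \in F /\ connect (darc F) y w.

Lemma on_cycle_parent F w y : indeg_le1 F -> on_cycle F y -> (w, y) \in F -> on_cycle F w.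
Proof.
move=> ind [w' [ew' cyw']] ewy; have <- := parent_unique ind ew' ewy.
case: (eqVneq y w') => [e|ne].
  by subst w'; exists y; split; [exact: ew' | exact: connect0].
case: (connect_last_arc cyw' ne) => u [cyu euw']; exists u; split => //.
exact: connect_trans (connect1 (ew' : darc F w' y)) cyu.
Qed.

Lemma on_cycle_ancestor F u y : indeg_le1 F -> on_cycle F y ->
  connect (darc F) u y -> connect (darc F) y u.
Proof.
move=> ind cy /connectP [p]; elim/last_ind: p y cy => [|p z IH] y cy /=.
  by move=> _ ->.
rewrite rcons_path last_rcons => /andP [pp ez] yz; subst y.
have := IH _ (on_cycle_parent ind cy ez) pp erefl; apply: connect_trans.
by case: cy => w [ewz czw]; rewrite -(parent_unique ind ewz ez).
Qed.

(* Branchings are acyclic: the root above a cycle would have a parent. *)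
Lemma branching_acyclic F x y : indeg_le1 F -> rooted F ->
  (x, y) \in F -> ~~ connect (darc F) y x.
Proof.
move=> ind hr exy; apply/negP => cyx; have cy : on_cycle F y by exists x.
case: (rooted_in_tree y hr) => r /andP [rr cry].
have yr := reach_root rr (on_cycle_ancestor ind cy cry).
by rewrite yr is_rootP in exy.
Qed.

Lemma in_tree_reach F x y j : indeg_le1 F -> rooted F ->
  connect (darc F) x y -> in_tree F y j = in_tree F x j.
Proof.
move=> ind hr cxy; case: (rooted_in_tree x hr) => r /[dup] rx /andP [rr crx].
have ry : in_tree F y r by rewrite /in_tree rr (connect_trans crx cxy).
by apply/idP/idP => H; [rewrite (in_tree_unique ind H ry) | rewrite (in_tree_unique ind H rx)].
Qed.

Lemma in_tree_root F i j : is_root F i -> in_tree F i j = (j == i).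
Proof.
move=> ri; apply/idP/eqP => [/andP [rj cji]|->]; first exact: (reach_root ri cji).
by rewrite /in_tree ri connect0.
Qed.

Lemma darc_uconnect F x y : connect (darc F) x y -> connect (uarc F) x y.
Proof. by apply: connect_sub => b c H; apply: connect1; apply/orP; left. Qed.

Lemma uconnect_same_tree F x y : indeg_le1 F -> rooted F ->
  connect (uarc F) x y = [exists r, in_tree F x r && in_tree F y r].
Proof.
move=> ind hr; apply/idP/idP.
- move: x y; apply: (connect_ind_rel (P := fun x y => [exists r, in_tree F x r && in_tree F y r])).
  + by move=> z; case: (rooted_in_tree z hr) => r H; apply/existsP; exists r; rewrite H.
  + move=> b c d /existsP [r /andP [H1 H2]] /existsP [r' /andP [H3 H4]].
    by apply/existsP; exists r; rewrite H1 (in_tree_unique ind H2 H3) H4.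
  + move=> b c /orP [] e; case: (rooted_in_tree b hr) => r H; apply/existsP; exists r;
      rewrite H /=.
    * by rewrite (@in_tree_reach F b c r ind hr) // connect1.
    * by rewrite -(@in_tree_reach F c b r ind hr) // connect1.
- case/existsP=> r /andP [/andP [_ H1] /andP [_ H2]].
  have usym : connect_sym (uarc F) by apply: sym_connect_sym => u v; rewrite /uarc orbC.
  apply: connect_trans (_ : connect (uarc F) x r) (darc_uconnect H2).
  by rewrite usym; apply: darc_uconnect.
Qed.

Lemma in_tree_rooted_atE F i j : indeg_le1 F -> rooted F ->
  in_tree_rooted_at F i j = in_tree F i j.
Proof.
move=> ind hr; rewrite /in_tree_rooted_at; apply/idP/idP.
- case/andP=> _ /forallP H; case: (rooted_in_tree i hr) => r /[dup] ir /andP [rr cri].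
  have : connect (darc F) j r.
    apply: (implyP (H r)); rewrite uconnect_same_tree //; apply/existsP; exists r.
    by rewrite ir /in_tree rr connect0.
  by move/(reach_root rr) => ->.
- move=> /[dup] ij /andP [rj cji]; rewrite uconnect_same_tree //; apply/andP; split.
    by apply/existsP; exists j; rewrite ij /in_tree rj connect0.
  apply/forallP => y; apply/implyP.
  rewrite uconnect_same_tree // => /existsP [r /andP [H1 H2]].
  by rewrite (in_tree_unique ind ij H1); case/andP: H2.
Qed.

End Branchings.

Section OutForests.
Variable n : nat.
Local Notation V := 'I_n.
Implicit Types (F G : {set V * V}) (x y z r : V).

Local Notation arcs_from F C := [set e in F | e.1 \in C].

Lemma wcomp_arc F x e : e \in F -> (e.1 \in wcomp F x) = (e.2 \in wcomp F x).
Proof.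
case: e => [b c] eF /=; rewrite !inE; apply/idP/idP => H; apply: connect_trans H (connect1 _).
  by rewrite /uarc eF.
by rewrite /uarc eF orbT.
Qed.

(* In a diverging-tree component, the heads of the arcs are all vertices but
   the root, each hit once: counting forces the map e |-> e.2 to be a
   bijection from the arcs onto C minus the root. *)
Lemma diverging_tree_compP F x : diverging_tree_comp F (wcomp F x) ->
  exists r, [/\ is_root F r, forall y, y \in wcomp F x -> connect (darc F) r y
    & {in arcs_from F (wcomp F x) &, injective (@snd V V)}].
Proof.
set C := wcomp F x; set S := arcs_from F C.
case/andP=> /eqP cS /existsP [r /andP [rC /forallP rall]].
have rallP y : y \in C -> connect (darc F) r y by apply: (implyP (rall y)).
have heads : C :\ r \subset (@snd V V) @: S.
  apply/subsetP=> y /setD1P [yr yC]; have ry : r != y by rewrite eq_sym.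
  case: (connect_last_arc (rallP y yC) ry) => z [crz ezy].
  apply/imsetP; exists (z, y) => //; rewrite inE (ezy : (z, y) \in F) /=.
  by move: rC; rewrite !inE => H; apply: connect_trans H (darc_uconnect crz).
have cCr : #|C :\ r| = (#|C| - 1)%N by rewrite (cardsD1 r C) rC add1n subn1.
have cardS : #|(@snd V V) @: S| = #|S|.
  by apply/eqP; rewrite eqn_leq leq_imset_card cS -cCr subset_leq_card.
have imS : C :\ r = (@snd V V) @: S by apply/eqP; rewrite eqEcard heads cardS cS -cCr leqnn.
exists r; split => //; last by apply/imset_injP; rewrite cardS.
apply/forallP => z; apply/negP => zr.
have : r \in (@snd V V) @: S.
  by apply/imsetP; exists (z, r) => //; rewrite inE zr /= (wcomp_arc x zr).
by rewrite -imS !inE eqxx.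
Qed.

Lemma out_forest_comps_branching F :
  [forall x, diverging_tree_comp F (wcomp F x)] -> indeg_le1 F && rooted F.
Proof.
move=> /forallP dt; apply/andP; split.
- apply/forallP=> y; apply/forallP=> x1; apply/forallP=> x2; apply/implyP=> e1; apply/implyP=> e2.
  case: (diverging_tree_compP (dt x1)) => r [_ _ inj].
  have m1 : (x1, y) \in arcs_from F (wcomp F x1) by rewrite !inE e1 /= connect0.
  have m2 : (x2, y) \in arcs_from F (wcomp F x1).
    by rewrite inE e2 /= (wcomp_arc x1 e2) -(wcomp_arc x1 e1) inE connect0.
  by have := inj _ _ m1 m2 erefl; case=> ->.
- apply/forallP=> v; case: (diverging_tree_compP (dt v)) => r [rr H _].
  by apply/existsP; exists r; rewrite rr H // inE connect0.
Qed.

(* In a branching, the weak component of x is the tree containing x; its arcs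
   are the in-arcs of its non-root vertices. *)
Lemma branching_comps F : indeg_le1 F -> rooted F ->
  [forall x, diverging_tree_comp F (wcomp F x)].
Proof.
move=> ind hr; apply/forallP=> x.
case: (rooted_in_tree x hr) => r /[dup] xr /andP [rr crx].
have Cdef y : (y \in wcomp F x) = in_tree F y r.
  rewrite inE uconnect_same_tree //; apply/existsP/idP => [[r' /andP [H1 H2]]|H].
    by rewrite (in_tree_unique ind xr H1).
  by exists r; rewrite xr H.
apply/andP; split; last first.
  apply/existsP; exists r; rewrite Cdef /in_tree rr connect0 /=.
  by apply/forallP => y; apply/implyP; rewrite Cdef => /andP [].
set C := wcomp F x; set S := arcs_from F C.
have imS : (@snd V V) @: S = C :\ r.
  apply/setP=> y; rewrite in_setD1 Cdef.
  apply/imsetP/andP => [[[b c]]|[yr /andP [_ cry]]].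
    rewrite inE /= Cdef => /andP [bc /andP [_ crb]] ->; split.
      by apply/eqP => cr; rewrite cr is_rootP in bc.
    by rewrite /in_tree rr (connect_trans crb (connect1 _)).
  case: (connect_last_arc cry _) => [|z [crz ezy]]; first by rewrite eq_sym.
  by exists (z, y) => //; rewrite inE (ezy : (z, y) \in F) /= Cdef /in_tree rr crz.
have inj : {in S &, injective (@snd V V)}.
  move=> [b c] [b' c']; rewrite !inE /= => /andP [e1 _] /andP [e2 _] ec.
  by subst c'; rewrite (parent_unique ind e1 e2).
rewrite -(card_in_imset inj) imS (cardsD1 r C) Cdef /in_tree rr connect0 /=.
by rewrite add1n subn1.
Qed.

Definition branching (R : numDomainType) (a : 'M[R]_n) F :=
  [&& subgraphb a F, indeg_le1 F & rooted F].

Lemma out_forestE (R : numDomainType) (a : 'M[R]_n) F : out_forest a F = branching a F.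
Proof.
rewrite /out_forest /branching; case: (subgraphb a F) => //=.
apply/idP/idP => [|/andP [ind hr]]; first exact: out_forest_comps_branching.
exact: branching_comps.
Qed.

End OutForests.

Section ArcOperations.
Variable n : nat.
Local Notation V := 'I_n.
Implicit Types (F G : {set V * V}) (x y z r : V).

Lemma connect_subset F G x y : F \subset G -> connect (darc F) x y -> connect (darc G) x y.
Proof. by move=> sFG; apply: connect_sub => b c H; apply: connect1; apply: (subsetP sFG). Qed.

Lemma connect_setU1 F u v x y : connect (darc ((u, v) |: F)) x y ->
  connect (darc F) x y || (connect (darc F) x u && connect (darc F) v y).
Proof.
move: x y; apply: (connect_ind_rel (P := fun x y => connect (darc F) x y ||
  (connect (darc F) x u && connect (darc F) v y))).
- by move=> z; rewrite connect0.
- move=> b c d /orP [H1|/andP [H1 H2]] /orP [H3|/andP [H3 H4]].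
  + by rewrite (connect_trans H1 H3).
  + by rewrite (connect_trans H1 H3) H4 orbT.
  + by rewrite H1 (connect_trans H2 H3) orbT.
  + by rewrite H1 H4 orbT.
- move=> b c; rewrite /darc in_setU1 => /orP [/eqP [-> ->]|H].
  + by rewrite !connect0 orbT.
  + by rewrite connect1.
Qed.

Lemma connect_setD1 F u v x y : connect (darc F) x y ->
  connect (darc (F :\ (u, v))) x y || connect (darc (F :\ (u, v))) v y.
Proof.
move: x y; apply: (connect_ind_rel (P := fun x y => connect (darc (F :\ (u, v))) x y ||
  connect (darc (F :\ (u, v))) v y)).
- by move=> z; rewrite connect0.
- move=> b c d /orP [H1|H1] /orP [H3|H3].
  + by rewrite (connect_trans H1 H3).
  + by rewrite H3 orbT.
  + by rewrite (connect_trans H1 H3) orbT.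
  + by rewrite H3 orbT.
- move=> b c bc; case: (eqVneq (b, c) (u, v)) => [[_ ->]|ne].
  + by rewrite connect0 orbT.
  + by rewrite connect1 // /darc in_setD1 ne.
Qed.

Lemma is_root_setU1 F u v r : r != v -> is_root ((u, v) |: F) r = is_root F r.
Proof.
move=> rv; apply/forallP/forallP => H x; move: (H x);
  by rewrite in_setU1 // xpair_eqE (negbTE rv) andbF.
Qed.

Lemma is_root_subset F G r : F \subset G -> is_root G r -> is_root F r.
Proof.
move=> sFG /forallP H; apply/forallP => x; apply/negP => xF.
by move: (H x); rewrite (subsetP sFG _ xF).
Qed.

Lemma indeg_le1_subset F G : F \subset G -> indeg_le1 G -> indeg_le1 F.
Proof.
move=> sFG ind; apply/forallP=> y; apply/forallP=> x; apply/forallP=> x'.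
apply/implyP=> e1; apply/implyP=> e2; apply/eqP.
exact: (parent_unique ind (subsetP sFG _ e1) (subsetP sFG _ e2)).
Qed.

Lemma indeg_le1_setU1 F l i : indeg_le1 F -> is_root F i -> indeg_le1 ((l, i) |: F).
Proof.
move=> ind ri; apply/forallP=> y; apply/forallP=> x; apply/forallP=> x'.
rewrite !in_setU1 !xpair_eqE.
case H1: ((x, y) \in F); case H2: ((x', y) \in F); rewrite /= ?orbT ?orbF.
- by apply/implyP => _; apply/implyP => _; apply/eqP; apply: (parent_unique ind H1 H2).
- by apply/implyP => _; apply/implyP => /andP [/eqP -> /eqP yi]; rewrite yi is_rootP in H1.
- by apply/implyP => /andP [/eqP -> /eqP yi]; rewrite yi is_rootP in H2.
- by apply/implyP => /andP [/eqP -> _]; apply/implyP => /andP [/eqP -> _].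
Qed.

Lemma rooted_setU1 F l i : rooted F -> is_root F i -> ~~ connect (darc F) i l ->
  rooted ((l, i) |: F).
Proof.
move=> hr ri nil; have sub : F \subset (l, i) |: F by apply: subsetUr.
apply/forallP => v; case: (rooted_in_tree v hr) => r /andP [rr crv].
case: (eqVneq r i) => [ei|ne].
- subst r; case: (rooted_in_tree l hr) => r' /andP [rr' cr'l].
  have ne' : r' != i by apply/eqP => e; subst r'; rewrite cr'l in nil.
  apply/existsP; exists r'; rewrite is_root_setU1 // rr' /=.
  apply: connect_trans (connect_subset sub cr'l) _.
  apply: connect_trans (connect1 _) (connect_subset sub crv).
  by rewrite /darc setU11.
- apply/existsP; exists r; rewrite is_root_setU1 // rr /=.
  exact: connect_subset sub crv.
Qed.

Lemma in_tree_setU1 F l i j : is_root F i -> ~~ connect (darc F) i l ->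
  in_tree ((l, i) |: F) i j = in_tree F l j.
Proof.
move=> ri nil; have sub : F \subset (l, i) |: F by apply: subsetUr.
apply/idP/idP.
- case/andP=> rj /connect_setU1 /orP [cji|/andP [cjl _]].
  + have ji := reach_root ri cji; subst j.
    by move: rj => /forallP /(_ l); rewrite setU11.
  + by rewrite /in_tree (is_root_subset sub rj) cjl.
- case/andP=> rj cjl.
  have ne : j != i by apply/eqP => e; subst j; rewrite cjl in nil.
  rewrite /in_tree is_root_setU1 // rj /=.
  apply: connect_trans (connect_subset sub cjl) (connect1 _).
  by rewrite /darc setU11.
Qed.

Lemma branching_setD1 F l i : indeg_le1 F -> rooted F -> (l, i) \in F ->
  [/\ indeg_le1 (F :\ (l, i)), rooted (F :\ (l, i)), is_root (F :\ (l, i)) i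
    & ~~ connect (darc (F :\ (l, i))) i l].
Proof.
move=> ind hr liF; set F0 := F :\ (l, i).
have sub : F0 \subset F by apply: subsetDl.
have ri : is_root F0 i.
  apply/forallP => x; rewrite in_setD1; apply/negP => /andP [ne xi].
  by rewrite (parent_unique ind xi liF) eqxx in ne.
split => //; first exact: indeg_le1_subset sub ind.
- apply/forallP => v; case: (rooted_in_tree v hr) => r /andP [rr crv].
  case/orP: (connect_setD1 l i crv) => c; apply/existsP.
  + by exists r; rewrite (is_root_subset sub rr) c.
  + by exists i; rewrite ri c.
- apply/negP => /(connect_subset sub); apply/negP.
  exact: branching_acyclic ind hr liF.
Qed.

End ArcOperations.

Section Reparent.
Variable n : nat.
Local Notation V := 'I_n.
Implicit Types (F G : {set V * V}) (x y z r : V).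

(* The parent of a non-root vertex i (i itself for a root). *)
Definition parent F i := odflt i [pick x | (x, i) \in F].

Lemma parentP F p i : indeg_le1 F -> (p, i) \in F -> parent F i = p.
Proof.
move=> ind pi; rewrite /parent; case: pickP => [x xi|/(_ p)]; last by rewrite pi.
exact: (parent_unique ind xi pi).
Qed.

Lemma parent_arc F i : ~~ is_root F i -> (parent F i, i) \in F.
Proof.
rewrite /is_root negb_forall => /existsP [x]; rewrite negbK => xi.
by rewrite /parent; case: pickP => [y //|/(_ x)]; rewrite xi.
Qed.

Definition reparent F i l := (l, i) |: (F :\ (parent F i, i)).

Lemma in_tree_reparent_out F i l x j : (parent F i, i) \in F ->
  ~~ connect (darc F) i x -> in_tree (reparent F i l) x j = in_tree F x j.
Proof.
rewrite /reparent; set p := parent F i; set F0 := F :\ (p, i) => piF nix.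
have sub0 : F0 \subset F by apply: subsetDl.
have sub2 : F0 \subset (l, i) |: F0 by apply: subsetUr.
have eF : F = (p, i) |: F0 by rewrite setD1K.
apply/idP/idP => /andP [rj cjx].
- have ji : j != i by apply/eqP => e; move: (is_rootP l rj); rewrite e setU11.
  case/orP: (connect_setU1 cjx) => [c|/andP [_ c]]; last by rewrite (connect_subset sub0 c) in nix.
  rewrite /in_tree (connect_subset sub0 c) andbT eF is_root_setU1 //.
  exact: (is_root_subset sub2 rj).
- have ji : j != i by apply/eqP => e; rewrite e in rj; rewrite (is_rootP _ rj) in piF.
  move: cjx; rewrite {1}eF => /connect_setU1 /orP [c|/andP [_ c]]; last first.
    by rewrite (connect_subset sub0 c) in nix.
  rewrite /in_tree (connect_subset sub2 c) andbT is_root_setU1 //.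
  by rewrite eF is_root_setU1 // in rj.
Qed.

Section Swap.
Variables (F : {set V * V}) (p i l : V).
Hypotheses (ind : indeg_le1 F) (hr : rooted F) (piF : (p, i) \in F)
  (nil : ~~ connect (darc F) i l) (lp : l != p).

Local Notation F0 := (F :\ (p, i)).
Local Notation F2 := (reparent F i l).

Lemma reparentE : F2 = (l, i) |: F0.
Proof. by rewrite /reparent (parentP ind piF). Qed.

Lemma reparent_notin : (l, i) \notin F0.
Proof. by apply/negP => /setD1P [_ H]; move: lp; rewrite (parent_unique ind H piF) eqxx. Qed.

Lemma reparent_branching :
  [/\ indeg_le1 F2, rooted F2, parent F2 i = l, ~~ connect (darc F2) i p
    & reparent F2 i p = F] /\ #|F2| = #|F|.
Proof.
have [ind0 hr0 ri0 nip0] := branching_setD1 ind hr piF.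
have nil0 : ~~ connect (darc F0) i l.
  by apply/negP => /(connect_subset (subsetDl F [set (p, i)])); apply/negP.
have ind2 : indeg_le1 F2 by rewrite reparentE indeg_le1_setU1.
have par2 : parent F2 i = l by apply: parentP; rewrite // reparentE setU11.
split; last by rewrite reparentE cardsU1 reparent_notin (cardsD1 (p, i) F) piF.
split => //; first by rewrite reparentE rooted_setU1.
- rewrite reparentE; apply/negP => /connect_setU1 /orP [c|/andP [c _]].
  + by rewrite c in nip0.
  + by rewrite c in nil0.
- by rewrite {1}/reparent par2 reparentE setU1K ?reparent_notin // setD1K.
Qed.

Lemma in_tree_reparent j :
  in_tree F2 i j = in_tree F l j /\ in_tree F2 p j = in_tree F i j.
Proof.
have [[ind2 hr2 _ _ _] _] := reparent_branching.
have piF' : (parent F i, i) \in F by rewrite (parentP ind piF).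
split.
- rewrite (@in_tree_reach _ F2 l i j ind2 hr2); first exact: in_tree_reparent_out.
  by apply: connect1; rewrite /darc reparentE setU11.
- rewrite in_tree_reparent_out //; last exact: branching_acyclic ind hr piF.
  by apply/esym/(@in_tree_reach _ F p i j ind hr); apply: connect1.
Qed.

Lemma sg_weight_reparent (R : numDomainType) (a : 'M[R]_n) :
  (a i p * sg_weight a F2 = a i l * sg_weight a F)%R.
Proof.
rewrite reparentE -{2}(setD1K piF) /sg_weight !big_setU1 ?reparent_notin ?setD11 //=.
by rewrite mulrCA.
Qed.

End Swap.
End Reparent.

Local Open Scope ring_scope.

Section WeightedBranchings.
Variables (R : numDomainType) (n : nat) (a : 'M[R]_n).
Local Notation V := 'I_n.
Implicit Types (F G : {set V * V}) (x y z r : V).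

Lemma subgraph_setU1 F l i : subgraphb a F -> 0 < a i l -> subgraphb a ((l, i) |: F).
Proof.
move=> /forallP sg pos; apply/forallP => e; apply/implyP.
by rewrite in_setU1 => /orP [/eqP -> //|eF]; exact: (implyP (sg e)).
Qed.

Lemma subgraph_subset F G : F \subset G -> subgraphb a G -> subgraphb a F.
Proof.
move=> sFG /forallP sg; apply/forallP => e; apply/implyP => eF.
exact: (implyP (sg e) (subsetP sFG _ eF)).
Qed.

Lemma branching_setU1 F l i : branching a F -> is_root F i ->
  ~~ connect (darc F) i l -> 0 < a i l -> branching a ((l, i) |: F).
Proof.
case/and3P=> sg ind hr ri nil pos.
by rewrite /branching subgraph_setU1 // indeg_le1_setU1 // rooted_setU1.
Qed.

Lemma branching_setD1_weighted F l i : branching a F -> (l, i) \in F ->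
  [/\ branching a (F :\ (l, i)), is_root (F :\ (l, i)) i,
      ~~ connect (darc (F :\ (l, i))) i l, 0 < a i l & l != i].
Proof.
case/and3P=> sg ind hr liF.
have [ind0 hr0 ri nil] := branching_setD1 ind hr liF.
split => //.
- by rewrite /branching ind0 hr0 (subgraph_subset (subsetDl _ _) sg).
- exact: (implyP (forallP sg (l, i)) liF).
- by apply/eqP => li; move: (branching_acyclic ind hr liF); rewrite li connect0.
Qed.

Lemma branching_reparent F p i l : branching a F -> (p, i) \in F ->
  ~~ connect (darc F) i l -> 0 < a i l -> l != p -> branching a (reparent F i l).
Proof.
move=> /[dup] bF /and3P [sg ind hr] piF nil pos lp.
have [[ind2 hr2 _ _ _] _] := reparent_branching ind hr piF nil lp.
rewrite /branching ind2 hr2 andbT (reparentE l ind piF) subgraph_setU1 //.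
exact: subgraph_subset (subsetDl _ _) sg.
Qed.

Lemma sg_weight_gt0 F : subgraphb a F -> 0 < sg_weight a F.
Proof. by move=> /forallP sg; apply: prodr_gt0 => e eF; exact: (implyP (sg e) eF). Qed.

End WeightedBranchings.

Section ForestRecursion.
Variables (R : numDomainType) (n : nat) (a : 'M[R]_n).
Hypothesis a_ge0 : forall i j, 0 <= a i j.
Local Notation V := 'I_n.
Local Notation Pair := ({set V * V} * V)%type.
Implicit Types (F G : {set V * V}) (q : Pair).

Definition kbranching k F := branching a F && (#|F| == k)%N.
Definition forest_sum k := \sum_(F | kbranching k F) sg_weight a F.
Definition forest_mx k : 'M[R]_n :=
  \matrix_(i, j) \sum_(F | kbranching k F && in_tree F i j) sg_weight a F.

Lemma forest_mxE k i j :
  forest_mx k i j = \sum_(F | kbranching k F) sg_weight a F * (in_tree F i j)%:R.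
Proof.
rewrite mxE big_mkcondr /=; apply: eq_bigr => F _.
by case: (in_tree F i j); rewrite ?mulr1 ?mulr0.
Qed.

Lemma kirchhoff_mulmx (M : 'M[R]_n) i j :
  (kirchhoff a *m M) i j = \sum_(l | l != i) a i l * (M i j - M l j).
Proof.
rewrite mxE (bigD1 i) //= /kirchhoff !mxE eqxx mulr_suml.
rewrite [X in _ + X](eq_bigr (fun l => - (a i l * M l j))) => [|l li]; last first.
  by rewrite !mxE (negbTE (_ : i != l)) ?mulNr // eq_sym.
by rewrite sumrN -sumrB; apply: eq_bigr => l _; rewrite mulrBr.
Qed.

Definition lap_term i j q : R :=
  a i q.2 * (sg_weight a q.1 * ((in_tree q.1 i j)%:R - (in_tree q.1 q.2 j)%:R)).

Lemma kirchhoff_forest_mx k i j :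
  (kirchhoff a *m forest_mx k) i j = \sum_(q | kbranching k q.1 && (q.2 != i)) lap_term i j q.
Proof.
rewrite kirchhoff_mulmx.
have -> : \sum_(l | l != i) a i l * (forest_mx k i j - forest_mx k l j) =
          \sum_(l | l != i) \sum_(F | kbranching k F) lap_term i j (F, l).
  apply: eq_bigr => l _; rewrite !forest_mxE -sumrB mulr_sumr; apply: eq_bigr => F _.
  by rewrite /lap_term /= [in RHS]mulrBr.
by rewrite exchange_big pair_big /=; apply: eq_bigr => [[F l]].
Qed.

(* A root i contributes nothing to sigma k - Q k at (i, j); a non-root i
   contributes once, through its parent arc. *)
Lemma forest_sum_sub_mx k i j :
  forest_sum k * (i == j)%:R - forest_mx k i j =
  \sum_(q | kbranching k q.1 && ((q.2, i) \in q.1))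
     sg_weight a q.1 * ((i == j)%:R - (in_tree q.1 i j)%:R).
Proof.
rewrite forest_mxE /forest_sum mulr_suml -sumrB.
rewrite -(pair_big_dep (kbranching k) (fun F l => (l, i) \in F)
  (fun F _ => sg_weight a F * ((i == j)%:R - (in_tree F i j)%:R))) /=.
apply: eq_bigr => F /andP [/and3P [_ ind _] _]; rewrite -mulrBr.
have [ri|nri] := boolP (is_root F i).
  rewrite big_pred0; last by move=> l; rewrite is_rootP.
  by rewrite in_tree_root // eq_sym subrr mulr0.
rewrite (big_pred1 (parent F i)) // => l; apply/idP/eqP => [H|->].
  by rewrite (parentP ind H).
exact: parent_arc.
Qed.

Definition hangable k i q :=
  [&& kbranching k q.1, q.2 != i, 0 < a i q.2, is_root q.1 i
    & ~~ connect (darc q.1) i q.2].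

(* Deleting the parent arc (l, i) of i is a bijection from the (k+1)-arc
   branchings in which i has a parent onto the hangable pairs. *)
Lemma hang_reindex k i j :
  \sum_(q | kbranching k.+1 q.1 && ((q.2, i) \in q.1))
     sg_weight a q.1 * ((i == j)%:R - (in_tree q.1 i j)%:R) =
  \sum_(q | hangable k i q) lap_term i j q.
Proof.
rewrite (reindex_onto (fun q : Pair => ((q.2, i) |: q.1, q.2))
                      (fun q : Pair => (q.1 :\ (q.2, i), q.2))) /=; last first.
  by move=> [G l] /= /andP [_ H]; rewrite setD1K.
have domE q : (kbranching k.+1 ((q.2, i) |: q.1) && ((q.2, i) \in (q.2, i) |: q.1)) &&
    ((((q.2, i) |: q.1) :\ (q.2, i), q.2) == q) = hangable k i q.
  case: q => F l /=; rewrite xpair_eqE eqxx andbT setU1K_eq setU11 andbT /hangable /=.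
  apply/idP/idP.
  + case/andP=> /andP [bG /eqP cG] nlF.
    have [] := branching_setD1_weighted bG (setU11 _ _); rewrite setU1K //.
    move=> bF rF nc pos li; rewrite /kbranching bF li pos rF nc !andbT /=.
    by move: cG; rewrite cardsU1 nlF add1n => -[->].
  + move=> /and5P [/andP [bF /eqP cF] li pos rF nc].
    have nlF : (l, i) \notin F by rewrite is_rootP.
    by rewrite /kbranching branching_setU1 // cardsU1 nlF cF add1n eqxx.
apply: eq_big => [q|[F l]]; first exact: domE.
rewrite domE /hangable /= => /and5P [_ _ _ rF nc].
have nlF : (l, i) \notin F by rewrite is_rootP.
rewrite /lap_term /sg_weight big_setU1 //= in_tree_setU1 // (in_tree_root j rF).
by rewrite (eq_sym j i) mulrA.
Qed.

Definition nonroot_pair k i q :=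
  [&& kbranching k q.1, q.2 != i, 0 < a i q.2 & ~~ is_root q.1 i].

Definition swappable k i q :=
  [&& nonroot_pair k i q, ~~ connect (darc q.1) i q.2 & q.2 != parent q.1 i].

Definition swap_pair k i q : Pair :=
  if swappable k i q then (reparent q.1 i q.2, parent q.1 i) else q.

Lemma swap_pair_swappable k i j q : swappable k i q ->
  [/\ swappable k i (swap_pair k i q), swap_pair k i (swap_pair k i q) = q
    & lap_term i j (swap_pair k i q) = - lap_term i j q].
Proof.
case: q => F l /[dup] Sq /and3P [/and4P [/andP [bF /eqP cF] li pos nr] nc lp].
rewrite /swap_pair Sq /=; set p := parent F i.
have piF : (p, i) \in F by apply: parent_arc.
have [_ ind hr] := and3P bF.
have [[_ _ par2 nip2 back] card] := reparent_branching ind hr piF nc lp.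
have [inTi inTp] := in_tree_reparent ind hr piF nc lp j.
have [_ _ _ posp pi] := branching_setD1_weighted bF piF.
have S2 : swappable k i (reparent F i l, p).
  rewrite /swappable /nonroot_pair /kbranching /= (branching_reparent bF piF) //.
  rewrite card cF eqxx pi posp nip2 par2 eq_sym lp /= andbT.
  by apply/negP => /(is_rootP l); rewrite (reparentE l ind piF) setU11.
split => //; first by rewrite S2 /= back par2.
rewrite /lap_term /= inTi inTp mulrA (sg_weight_reparent ind piF lp).
by rewrite -opprB !mulrN mulrA.
Qed.

Lemma swap_pair_involutive k i : involutive (swap_pair k i).
Proof.
move=> q; have [Sq|nSq] := boolP (swappable k i q).
  by case: (swap_pair_swappable i Sq).
by rewrite /swap_pair (negbTE nSq) (negbTE nSq).
Qed.

Lemma nonroot_pair_swap k i q : nonroot_pair k i (swap_pair k i q) = nonroot_pair k i q.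
Proof.
have [Sq|nSq] := boolP (swappable k i q); last by rewrite /swap_pair (negbTE nSq).
have [/andP [-> _] _ _] := swap_pair_swappable i Sq.
by case/andP: Sq => ->.
Qed.

(* The involution reverses the sign of every term; its fixed points have l in
   the same tree as i (l below i, or l the parent of i), hence vanish. *)
Lemma lap_term_swap k i j q : nonroot_pair k i q ->
  lap_term i j (swap_pair k i q) = - lap_term i j q.
Proof.
move=> Dq; have [Sq|nSq] := boolP (swappable k i q).
  by case: (swap_pair_swappable j Sq).
rewrite /swap_pair (negbTE nSq); case: q Dq nSq => F l Dq nSq.
have [/andP [/and3P [_ ind hr] _] _ _ nr] := and4P Dq.
suff same : in_tree F l j = in_tree F i j by rewrite /lap_term /= same subrr !mulr0 oppr0.
have [c|nc] := boolP (connect (darc F) i l); first exact: in_tree_reach.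
have [e|ne] := eqVneq l (parent F i); last by move: nSq; rewrite /swappable Dq nc ne.
by apply/esym/in_tree_reach => //; apply: connect1; rewrite /darc e parent_arc.
Qed.

Lemma nonroot_pairs_cancel k i j : \sum_(q | nonroot_pair k i q) lap_term i j q = 0.
Proof.
set S := \sum_(q | nonroot_pair k i q) lap_term i j q.
have SN : S = - S.
  rewrite {1}/S (reindex_inj (inv_inj (swap_pair_involutive k i))) /= -sumrN.
  apply: eq_big => [q|q Dq]; first by rewrite nonroot_pair_swap.
  by rewrite nonroot_pair_swap in Dq; apply: lap_term_swap.
have : S *+ 2 == 0 by rewrite mulr2n {1}SN addNr.
by rewrite mulrn_eq0 /= => /eqP.
Qed.

Lemma forest_recursion k :
  kirchhoff a *m forest_mx k = forest_sum k.+1 *: 1%:M - forest_mx k.+1.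
Proof.
apply/matrixP => i j; rewrite kirchhoff_forest_mx.
have -> : (forest_sum k.+1 *: 1%:M - forest_mx k.+1) i j =
    forest_sum k.+1 * (i == j)%:R - forest_mx k.+1 i j by rewrite !mxE.
rewrite forest_sum_sub_mx hang_reindex.
rewrite [LHS](bigID (fun q : Pair => 0 < a i q.2)) /=.
rewrite [X in _ + X = _]big1 ?addr0; last first.
  move=> [F l] /= /andP [_ H]; rewrite /lap_term /=.
  have -> : a i l = 0 by apply/eqP; move: H; rewrite lt_def a_ge0 andbT negbK.
  by rewrite mul0r.
rewrite [LHS](bigID (fun q : Pair => is_root q.1 i)) /=.
rewrite [X in _ + X = _](_ : _ = 0) ?addr0; last first.
  by apply: etrans (nonroot_pairs_cancel k i j); apply: eq_bigl => q; rewrite /nonroot_pair !andbA.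
rewrite [LHS](bigID (fun q : Pair => ~~ connect (darc q.1) i q.2)) /=.
rewrite [X in _ + X = _]big1 ?addr0; last first.
  move=> [F l] /= /andP [/andP [/andP [/andP [/andP [bF _] _] _] _] c].
  have [_ ind hr] := and3P bF; rewrite negbK in c.
  by rewrite /lap_term /= (in_tree_reach _ ind hr c) subrr !mulr0.
by apply: eq_bigl => q; rewrite /hangable !andbA.
Qed.

End ForestRecursion.

Section MaxForests.
Variables (R : numFieldType) (n : nat) (a : 'M[R]_n).
Hypothesis a_ge0 : forall i j, 0 <= a i j.
Local Notation V := 'I_n.
Implicit Types (F : {set V * V}).

Definition max_arcs := (\max_(F | branching a F) #|F|)%N.

Lemma branching_set0 : branching a set0.
Proof.
apply/and3P; split.
- by apply/forallP => e; rewrite in_set0.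
- by apply/forallP => y; apply/forallP => x; apply/forallP => x'; rewrite in_set0.
- apply/forallP => v; apply/existsP; exists v; rewrite connect0 andbT.
  by apply/forallP => x; rewrite in_set0.
Qed.

Lemma max_out_forestE F : max_out_forest a F = kbranching a max_arcs F.
Proof.
rewrite /max_out_forest out_forestE /kbranching; case bF: (branching a F) => //=.
apply/forallP/eqP => [H|->].
- apply/eqP; rewrite eqn_leq leq_bigmax_cond //=.
  by apply/bigmax_leqP => G bG; move: (H G); rewrite out_forestE bG.
- by move=> G; rewrite out_forestE; apply/implyP => bG; exact: leq_bigmax_cond.
Qed.

Lemma kbranching_gt_max F : kbranching a max_arcs.+1 F = false.
Proof.
rewrite /kbranching; case bF: (branching a F) => //=; apply/negP => /eqP c.
by have := @leq_bigmax_cond _ (branching a) (fun G => #|G|) F bF; rewrite c ltnn.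
Qed.

Lemma forest_sum_max_gt0 : 0 < forest_sum a max_arcs.
Proof.
have : (0 < #|[pred F | branching a F]|)%N.
  by apply/card_gt0P; exists set0; rewrite inE branching_set0.
case/(eq_bigmax_cond (fun F : {set V * V} => #|F|)) => F0; rewrite inE => bF0 e.
have kF0 : kbranching a max_arcs F0 by rewrite /kbranching bF0 /max_arcs -e /=.
rewrite /forest_sum (bigD1 F0) //=; apply: lt_le_trans (_ : sg_weight a F0 <= _).
  by apply: sg_weight_gt0; case/and3P: bF0.
rewrite lerDl; apply: sumr_ge0 => F /andP [/andP [bF _] _].
by apply/ltW/sg_weight_gt0; case/and3P: bF.
Qed.

Lemma kbranching0 F : kbranching a 0 F = (F == set0).
Proof. by rewrite /kbranching cards_eq0; case: eqP => [->|_]; rewrite ?branching_set0 ?andbF. Qed.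

Lemma in_tree_set0 i j : in_tree (set0 : {set V * V}) i j = (j == i).
Proof. by rewrite in_tree_root //; apply/forallP => x; rewrite in_set0. Qed.

Lemma forest_sum0 : forest_sum a 0 = 1.
Proof.
rewrite /forest_sum (big_pred1 set0) => [|F]; last by rewrite kbranching0.
by rewrite /sg_weight big_set0.
Qed.

Lemma forest_mx0 : forest_mx a 0 = 1%:M.
Proof.
apply/matrixP => i j; rewrite !mxE.
rewrite (eq_bigl (fun F => (F == set0) && (i == j))) => [|F]; last first.
  by rewrite kbranching0; case: eqP => [->|] //=; rewrite in_tree_set0 eq_sym.
case: eqP => _ /=; last by rewrite big_pred0 // => F; rewrite andbF.
by rewrite (big_pred1 set0) => [|F]; rewrite ?andbT // /sg_weight big_set0.
Qed.

Lemma Jbar_forest_mx : Jbar a = (forest_sum a max_arcs)^-1 *: forest_mx a max_arcs.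
Proof.
apply/matrixP => i j; rewrite !mxE mulrC /forest_sum.
congr (_ * _); first by congr (_^-1); apply: eq_bigl => F; rewrite max_out_forestE.
apply: eq_bigl => F; rewrite max_out_forestE; case kF: (kbranching a max_arcs F) => //=.
by case/andP: kF => /and3P [_ ind hr] _; rewrite in_tree_rooted_atE.
Qed.

(* The recursion at k = max_arcs: no branching has more arcs, so L Jbar = 0. *)
Lemma kirchhoff_Jbar : kirchhoff a *m Jbar a = 0.
Proof.
rewrite Jbar_forest_mx -scalemxAr forest_recursion //.
have -> : forest_mx a max_arcs.+1 = 0.
  by apply/matrixP => i j; rewrite !mxE big_pred0 // => F; rewrite kbranching_gt_max.
have -> : forest_sum a max_arcs.+1 = 0.
  by rewrite /forest_sum big_pred0 // => F; rewrite kbranching_gt_max.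
by rewrite scale0r subrr scaler0.
Qed.

(* The recursion at k = max_arcs - 1 writes I - Jbar as L X. *)
Lemma Jbar_complement : exists X, 1%:M - Jbar a = kirchhoff a *m X.
Proof.
have S0 : forest_sum a max_arcs != 0 by rewrite gt_eqF // forest_sum_max_gt0.
case E : max_arcs => [|k].
  by exists 0; rewrite mulmx0 Jbar_forest_mx E forest_mx0 forest_sum0 invr1 scale1r subrr.
exists ((forest_sum a max_arcs)^-1 *: forest_mx a k).
rewrite -scalemxAr forest_recursion // Jbar_forest_mx -E.
by rewrite scalerBr scalerA mulVf // scale1r.
Qed.

End MaxForests.

Section Cesaro.
Variables (R : archiNumFieldType) (n : nat).
Implicit Types (A B P J Y : 'M[R]_n).

Lemma row_stochastic1 : row_stochastic (1%:M : 'M[R]_n).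
Proof.
split=> [i j|i]; first by rewrite mxE ler0n.
rewrite (bigD1 i) //= big1 ?addr0 => [|j ji]; rewrite mxE ?eqxx //.
by rewrite eq_sym (negbTE ji).
Qed.

Lemma row_stochasticM A B :
  row_stochastic A -> row_stochastic B -> row_stochastic (A *m B).
Proof.
move=> [A0 A1] [B0 B1]; split => [i j|i].
  by rewrite mxE; apply: sumr_ge0 => l _; apply: mulr_ge0.
under eq_bigr do rewrite mxE.
rewrite exchange_big /= -(A1 i); apply: eq_bigr => l _.
by rewrite -mulr_sumr B1 mulr1.
Qed.

Lemma row_stochasticX P k : row_stochastic P -> row_stochastic (P ^+ k).
Proof.
move=> sP; elim: k => [|k IH]; first by rewrite expr0 -idmxE; apply: row_stochastic1.
by rewrite exprSr -mulmxE; apply: row_stochasticM.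
Qed.

Lemma row_stochastic_le1 P i j : row_stochastic P -> `|P i j| <= 1.
Proof.
case=> P0 P1; rewrite ger0_norm // -(P1 i) (bigD1 j) //= lerDl.
exact: sumr_ge0.
Qed.

Lemma mulmx_entry_le A Y c i j : (forall l, `|A i l| <= c) ->
  `|(A *m Y) i j| <= c * \sum_l \sum_j' `|Y l j'|.
Proof.
move=> Ac; rewrite mxE mulr_sumr; apply: le_trans (ler_norm_sum _ _ _) _.
apply: ler_sum => l _; rewrite normrM.
apply: ler_pM => //; rewrite (bigD1 j) //= lerDl.
exact: sumr_ge0.
Qed.

Section FixedPoint.
Variables (P J Y : 'M[R]_n).
Hypotheses (sP : row_stochastic P) (PJ : P *m J = J) (IJ : 1%:M - J = (1%:M - P) *m Y).

(* Telescoping: the m-th Cesaro mean differs from J by (P - P^(m+1)) Y / m. *)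
Lemma cesaro_mean_sub m : (0 < m)%N ->
  cesaro_mean P m - J = m%:R^-1 *: ((P - P ^+ m.+1) *m Y).
Proof.
move=> m_gt0; set S := \sum_(1 <= k < m.+1) P ^+ k.
have SJ : S *m J = J *+ m.
  rewrite /S mulmx_suml (eq_bigr (fun _ => J)) => [|k _]; last first.
    by elim: k => [|k IH]; rewrite ?expr0 ?mul1mx // exprSr -mulmxE -mulmxA PJ.
  by rewrite sumr_const_nat subn1.
have SIP : S *m (1%:M - P) = P - P ^+ m.+1.
  rewrite /S mulmx_suml (telescope_sumr_eq (fun k => - P ^+ k)) //.
    by rewrite opprK expr1 addrC.
  by move=> k _; rewrite mulmxBr mulmx1 mulmxE -exprSr opprK addrC.
have m0 : m%:R != 0 :> R by rewrite pnatr_eq0 -lt0n.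
have -> : J = m%:R^-1 *: (S *m J) by rewrite SJ -scaler_nat scalerA mulVf // scale1r.
by rewrite /cesaro_mean -/S -scalerBr -{1}(mulmx1 S) -mulmxBr IJ mulmxA SIP.
Qed.

Lemma cesaro_limit_fixed : cesaro_limit P J.
Proof.
move=> e e_gt0; set B := \sum_l \sum_j `|Y l j|.
have B_ge0 : 0 <= B by apply: sumr_ge0 => l _; apply: sumr_ge0.
have c_ge0 : 0 <= (2 * B + 1) / e.
  by apply: divr_ge0; [rewrite addr_ge0 ?mulr_ge0 | exact: ltW].
exists (Num.bound ((2 * B + 1) / e)) => m Nm i j.
have m_gt0 : (0 < m)%N by apply: leq_ltn_trans Nm.
have mB : (2 * B + 1) / e < m%:R.
  by apply: lt_trans (archi_boundP c_ge0) _; rewrite ltr_nat.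
have diff2 l : `|(P - P ^+ m.+1) i l| <= 2.
  rewrite !mxE; apply: le_trans (ler_normB _ _) _.
  rewrite -[2]/(1 + 1); apply: lerD; first exact: row_stochastic_le1.
  exact/row_stochastic_le1/row_stochasticX.
have -> : cesaro_mean P m i j - J i j = (cesaro_mean P m - J) i j by rewrite !mxE.
rewrite cesaro_mean_sub // mxE normrM ger0_norm ?invr_ge0 ?ler0n //.
apply: le_lt_trans (ler_wpM2l _ (mulmx_entry_le Y j diff2)) _; first by rewrite invr_ge0.
rewrite ltr_pdivrMl ?ltr0n // -/B.
rewrite ltr_pdivrMr // in mB; apply: lt_trans mB.
by rewrite ltrDl ltr01.
Qed.

End FixedPoint.
End Cesaro.

Theorem proposition8 (R : archiRealFieldType) (n : nat) (a : 'M[R]_n)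
  (ha_nonneg : forall i j, 0 <= a i j) (ha_loop : forall i, a i i = 0)
  (eps : R) (heps : 0 < eps)
  (hP : row_stochastic (1%:M - eps *: kirchhoff a)) :
  cesaro_limit (1%:M - eps *: kirchhoff a) (Jbar a).
Proof.
have [X hX] := Jbar_complement ha_nonneg.
have IP : 1%:M - (1%:M - eps *: kirchhoff a) = eps *: kirchhoff a by rewrite opprB addrC subrK.
apply: (cesaro_limit_fixed (Y := eps^-1 *: X) hP).
- by rewrite mulmxBl mul1mx -scalemxAl kirchhoff_Jbar // scaler0 subr0.
- by rewrite IP -scalemxAl -scalemxAr scalerA mulfV ?gt_eqF // scale1r.
Qed.
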